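(* Let $t\ge 1$ and $t\le k\le v$, $\lambda\ge 1$ be integers, and suppose there exists a $t$-$(v,k,\lambda)$ design whose number of blocks $b=\lambda\binom{v}{t}/\binom{k}{t}$ is divisible by $v$. Then there exists an authentication system with $k$ source states, $v$ messages and $b$ encoding rules which, when the source states are equiprobable and the encoding rules are used with equal probability, has perfect secrecy and is $(t-1)$-fold secure against spoofing. Moreover, this system is optimal (i.e. $b=\binom{v}{t}/\binom{k}{t}$) if and only if $\lambda=1$.
   Context: A $t$-$(v,k,\lambda)$ design is a pair $(X,\mathcal{B})$ where $X$ is a set of $v$ points and $\mathcal{B}$ is a collection of distinct $k$-subsets of $X$ (blocks; no repeated blocks allowed) such that every $t$-subset of $X$ is contained in exactly $\lambda$ blocks; $b=|\mathcal{B}|$. Authentication system: finite sets $\mathcal{S}$ of $k$ source states, $\mathcal{M}$ of $v$ messages, $\mathcal{E}$ of $b$ encoding rules, each $e\in\mathcal{E}$ an injective map $\mathcal{S}\to\mathcal{M}$; $M(e)=\{e(s):s\in\mathcal{S}\}$ is the set of messages valid (accepted) under $e$. A key $e$ is drawn according to a distribution $p_E$ on $\mathcal{E}$, source states according to $p_S$, independently; ''equiprobable source states'' means source states are independent and uniformly distributed, and for each $i$ every $i$-subset of distinct source states is equally likely to be the set of sent source states. Perfect secrecy: $p_S(s\mid m)=p_S(s)$ for every $s\in\mathcal{S}$ and every message $m$ (equivalently, $\sum_{e:\,e(s)=m}p_E(e)=\sum_{e:\,m\in M(e)}p_E(e)p_S(e^{-1}(m))$ for all $s,m$). Spoofing attack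 of order $i$: the opponent observes $i\ge 0$ distinct messages produced from $i$ distinct source states under the same secret key $e$, and then sends a new message distinct from these; he succeeds if it lies in $M(e)$. The deception probability $P_{d_i}$ is the maximum success probability over all opponent strategies. One always has $P_{d_i}\ge (k-i)/(v-i)$, and the system is called $t$-fold secure against spoofing if $P_{d_i}=(k-i)/(v-i)$ for all $0\le i\le t$. A $(t-1)$-fold secure system always has $b\ge \binom{v}{t}/\binom{k}{t}$; it is called optimal when equality holds. *)

From HB Require Import structures.
From mathcomp Require Import all_boot all_order all_algebra.
Set Implicit Arguments. Unset Strict Implicit. Unset Printing Implicit Defensive.
Import Order.TTheory GRing.Theory Num.Theory.
Local Open Scope ring_scope.

(* t-(v,k,lambda) design on the point set 'I_v : a set B of distinct blocks
   (a set of k-subsets), every t-subset in exactly lam blocks. b = #|B|. *)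
Definition is_design (v t k lam : nat) (B : {set {set 'I_v}}) : Prop :=
  (forall A, A \in B -> #|A| = k) /\
  (forall T : {set 'I_v}, #|T| = t -> #|[set A in B | T \subset A]| = lam).

Section Auth.
Variables (S M E : finType) (enc : E -> S -> M).

Definition valid (e : E) : {set M} := [set enc e s | s : S].

(* Perfect secrecy, in the equivalent form of the context:
   sum_{e : e(s)=m} pE(e) = sum_{e : m in M(e)} pE(e) pS(e^{-1}(m)). *)
Definition perfect_secrecy (pE : E -> rat) (pS : S -> rat) : Prop :=
  forall (s : S) (m : M),
    \sum_(e | enc e s == m) pE e =
    \sum_(e | m \in valid e) pE e * \sum_(s' | enc e s' == m) pS s'.

(* success probability of an opponent strategy f (observed set of messages
   |-> substituted message) in a spoofing attack of order i; pT is the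
   probability that a given i-subset of source states is the sent set. *)
Definition spoof_success (pE : E -> rat) (pT : {set S} -> rat) (i : nat)
    (f : {ffun {set M} -> M}) : rat :=
  \sum_e pE e * \sum_(T : {set S} | #|T| == i)
                 pT T * (f (enc e @: T) \in valid e)%:R.

Definition admissible (i : nat) (f : {ffun {set M} -> M}) : bool :=
  [forall O : {set M}, (#|O| == i) ==> (f O \notin O)].

Definition deception (pE : E -> rat) (pT : {set S} -> rat) (i : nat) : rat :=
  \big[Num.max/0]_(f : {ffun {set M} -> M} | admissible i f)
     spoof_success pE pT i f.

Definition equi_subsets (i : nat) (T : {set S}) : rat := 1 / ('C(#|S|, i))%:R.
Definition uniformS (s : S) : rat := 1 / (#|S|)%:R.
Definition uniformE (e : E) : rat := 1 / (#|E|)%:R.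

Definition fold_secure (pE : E -> rat) (t : nat) : Prop :=
  forall i : nat, (i <= t)%N ->
    deception pE (equi_subsets i) i = ((#|S|)%:R - i%:R) / ((#|M|)%:R - i%:R).

End Auth.

From HB Require Import structures.
From mathcomp Require Import all_boot all_order all_algebra.
From mathcomp Require Import zify ring.
Import Order.TTheory GRing.Theory Num.Theory.

(* The key combinatorial step is an
   "orderly" listing of every block as an injective map 'I_k -> 'I_v such
   that, for every position s, each point occurs at position s in exactly
   q = b/v blocks.  Block/point incidence is a regular bipartite graph
   (k points per block, r = kq blocks per point), so Hall's marriage theorem
   gives a choice of one point per block hitting every point exactly q times;
   removing the chosen points leaves a regular graph of degree k-1 and we
   iterate.  With encoding rules e |-> (s |-> block e at position s):
   - perfect secrecy holds because a message m occurs at a fixed position in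
     q blocks and occurs at all in kq = k * q blocks;
   - spoofing of order i < t succeeds with probability c_(i+1)/c_i, where c_j
     is the number of blocks through a j-set of points (constant since a
     t-design is also a j-design); the counting identities for c_j give
     (k - i)/(v - i);
   - b * 'C(k,t) = lam * 'C(v,t), which gives the optimality criterion. *)

Set Implicit Arguments.
Unset Strict Implicit.
Unset Printing Implicit Defensive.

Section Hall.
Variables (I J : finType).

Definition hall_cond (N : I -> {set J}) (D : {set I}) : Prop :=
  forall X : {set I}, X \subset D -> #|X| <= #|\bigcup_(i in X) N i|.

Definition is_sdr (N : I -> {set J}) (D : {set I}) (f : I -> J) : Prop :=
  {in D &, injective f} /\ {in D, forall i, f i \in N i}.

Lemma bigcup_setDr (N : I -> {set J}) (X : {set I}) (U : {set J}) :
  \bigcup_(i in X) (N i :\: U) = (\bigcup_(i in X) N i) :\: U.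
Proof.
apply/setP=> j; rewrite inE; apply/bigcupP/andP.
  by case=> i iX /setDP[jN jU]; split=> //; apply/bigcupP; exists i.
by case=> jU /bigcupP[i iX jN]; exists i; rewrite // inE jU.
Qed.

Lemma sdr_glue (N : I -> {set J}) (D X : {set I}) (U : {set J}) (f1 f2 : I -> J) :
  is_sdr N X f1 -> {in X, forall i, f1 i \in U} ->
  is_sdr (fun i => N i :\: U) (D :\: X) f2 ->
  is_sdr N D (fun i => if i \in X then f1 i else f2 i).
Proof.
move=> [inj1 in1] f1U [inj2 in2].
have inDX i : i \in D -> i \notin X -> i \in D :\: X by move=> iD iX; rewrite inE iX.
have f2U i : i \in D -> i \notin X -> f2 i \notin U.
  by move=> iD iX; have /setDP[] := in2 i (inDX i iD iX).
split=> [i i' iD i'D|i iD]; last first.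
  case: ifP => iX; first exact: in1.
  by have /setDP[] := in2 i (inDX i iD (negbT iX)).
case: ifP => iX; case: ifP => i'X.
- exact: inj1.
- by move=> e; have := f2U i' i'D (negbT i'X); rewrite -e f1U.
- by move=> e; have := f2U i iD (negbT iX); rewrite e f1U.
- by apply: inj2; apply: inDX => //; apply: negbT.
Qed.

Lemma hall_cond_critical (N : I -> {set J}) (D X : {set I}) :
  hall_cond N D -> X \subset D -> #|\bigcup_(i in X) N i| = #|X| ->
  hall_cond (fun i => N i :\: \bigcup_(i in X) N i) (D :\: X).
Proof.
move=> hD sXD tightX Y sY; rewrite bigcup_setDr.
set NX := \bigcup_(i in X) N i; set NY := \bigcup_(i in Y) N i.
have dYX : Y :&: X = set0.
  apply/setP=> i; rewrite !inE; apply/negbTE/andP=> -[iY iX].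
  by have := subsetP sY i iY; rewrite inE iX.
have sYXD : Y :|: X \subset D by rewrite subUset sXD (subset_trans sY) ?subsetDl.
have := hD _ sYXD; rewrite bigcup_setU -/NX -/NY.
have := cardsUI Y X; rewrite dYX cards0 addn0 => ->.
rewrite cardsU cardsD tightX.
have := subset_leq_card (subsetIl NY NX); lia.
Qed.

Lemma hall_cond_loose (N : I -> {set J}) (D : {set I}) (i0 : I) (j1 : J) :
  (forall X : {set I}, X \subset D -> X != set0 -> X != D ->
     #|X| < #|\bigcup_(i in X) N i|) ->
  i0 \in D -> hall_cond (fun i => N i :\ j1) (D :\ i0).
Proof.
move=> hl i0D Y sY; rewrite bigcup_setDr.
have [->|nY0] := eqVneq Y set0; first by rewrite cards0.
have sYD : Y \subset D by apply: subset_trans sY (subsetDl _ _).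
have nYD : Y != D.
  by apply/eqP=> YD; have := subsetP sY i0; rewrite YD i0D !inE eqxx => /(_ isT).
have := hl Y sYD nY0 nYD; rewrite cardsD.
have := subset_leq_card (subsetIr (\bigcup_(i in Y) N i) [set j1]); rewrite cards1; lia.
Qed.

(* Hall's theorem, by strong induction on #|D|, splitting on whether a
   critical subfamily exists; j0 is only used when D is empty. *)
Theorem hall_marriage (j0 : J) (N : I -> {set J}) (D : {set I}) :
  hall_cond N D -> exists f, is_sdr N D f.
Proof.
move: {2}#|D| (leqnn #|D|) => n; elim: n N D => [|n IH] N D leD hD.
  have -> : D = set0 by apply/eqP; rewrite -cards_eq0 -leqn0.
  by exists (fun _ => j0); split=> i; rewrite inE.
have [X /and4P[sXD nX0 nXD tightX] | loose] :=
  pickP [pred X : {set I} | [&& X \subset D, X != set0, X != D &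
                              #|\bigcup_(i in X) N i| <= #|X|]].
  have eqX : #|\bigcup_(i in X) N i| = #|X| by apply/eqP; rewrite eqn_leq tightX hD.
  have ltXD : #|X| < #|D| by apply: proper_card; rewrite properEneq nXD.
  have leX : #|X| <= n by rewrite -ltnS (leq_trans ltXD).
  have [f1 sdr1] := IH N X leX (fun Y sYX => hD Y (subset_trans sYX sXD)).
  have leDX : #|D :\: X| <= n by rewrite cardsDS //; move: nX0; rewrite -card_gt0; lia.
  have [f2 sdr2] := IH _ _ leDX (hall_cond_critical hD sXD eqX).
  have f1NX : {in X, forall i, f1 i \in \bigcup_(i in X) N i}.
    by move=> i iX; apply/bigcupP; exists i => //; case: sdr1 => _; apply.
  by exists (fun i => if i \in X then f1 i else f2 i); apply: sdr_glue sdr1 f1NX sdr2.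
have [D0|[i0 i0D]] := set_0Vmem D.
  by exists (fun _ => j0); rewrite D0; split=> i; rewrite inE.
have hl (X : {set I}) : X \subset D -> X != set0 -> X != D -> #|X| < #|\bigcup_(i in X) N i|.
  by move=> sXD nX0 nXD; rewrite ltnNge; have := loose X; rewrite /= sXD nX0 nXD => /negbT.
have : 0 < #|\bigcup_(i in [set i0]) N i| by have := hD [set i0]; rewrite sub1set cards1; apply.
rewrite card_gt0 => /set0Pn[j1 /bigcupP[i1]]; rewrite inE => /eqP -> j1N.
have leDi0 : #|D :\ i0| <= n by move: leD; rewrite (cardsD1 i0 D) i0D.
have [f2 sdr2] := IH _ _ leDi0 (hall_cond_loose j1 hl i0D).
exists (fun i => if i \in [set i0] then j1 else f2 i); apply: sdr_glue sdr2 => //.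
  by split=> [i i' | i]; rewrite !inE => /eqP -> // /eqP ->.
by move=> i _; rewrite inE.
Qed.

End Hall.

Section RegularChoice.
Variables (E P : finType).
Implicit Types (A : E -> {set P}) (X : {set E}).

Lemma double_count A X :
  \sum_(e in X) #|A e| = \sum_x #|[set e in X | x \in A e]|.
Proof.
transitivity (\sum_(e in X) \sum_x (x \in A e : nat)).
  by apply: eq_bigr => e _; rewrite -sum1_card big_mkcond; apply: eq_bigr => x _; case: ifP.
rewrite exchange_big /=; apply: eq_bigr => x _.
rewrite -sum1_card [RHS]big_mkcond [LHS]big_mkcond; apply: eq_bigr => e _.
by rewrite inE; case: (e \in X).
Qed.

Lemma neighbourhood_bound A X n m :
  (forall e, #|A e| = n) -> (forall x, #|[set e | x \in A e]| <= m) ->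
  n * #|X| <= m * #|\bigcup_(e in X) A e|.
Proof.
move=> hA hx; set U := \bigcup_(e in X) A e.
have := double_count A X; rewrite (eq_bigr (fun _ => n)) // sum_nat_const mulnC => ->.
rewrite (bigID (mem U)) /= [X in _ + X]big1 ?addn0 => [|x xU]; last first.
  apply/eqP; rewrite cards_eq0; apply/eqP/setP=> e; rewrite !inE.
  by apply/negbTE/andP=> -[eX xA]; case/negP: xU; apply/bigcupP; exists e.
rewrite mulnC -sum_nat_const; apply: leq_sum => x _; apply: leq_trans (hx x).
by apply: subset_leq_card; apply/subsetP=> e; rewrite !inE => /andP[].
Qed.

(* If every member has n > 0 points and every point lies in n q members,
   one can choose a point in each member so that every point is chosen
   exactly q times: a perfect matching between E and q copies of P. *)
Lemma regular_choice A (x0 : P) n q : 0 < n -> 0 < q ->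
  (forall e, #|A e| = n) -> (forall x, #|[set e | x \in A e]| = n * q) ->
  exists h : E -> P, (forall e, h e \in A e) /\ forall x, #|[set e | h e == x]| = q.
Proof.
move=> n0 q0 hA hx.
have cardE : #|E| = #|P| * q.
  have := double_count A setT; rewrite (eq_bigr (fun _ => n)) // sum_nat_const cardsT.
  rewrite (eq_bigr (fun _ => n * q)) => [|x _]; last first.
    by rewrite -(hx x); apply: eq_card => e; rewrite !inE.
  by rewrite sum_nat_const mulnCA => /eqP; rewrite mulnC eqn_pmul2l // => /eqP.
pose N e : {set P * 'I_q} := setX (A e) setT.
have hallN : hall_cond N setT.
  move=> X _; have -> : \bigcup_(e in X) N e = setX (\bigcup_(e in X) A e) setT.
    apply/setP=> -[x j]; rewrite !inE andbT; apply/bigcupP/bigcupP => -[e eX].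
      by rewrite inE => /andP[xA _]; exists e.
    by move=> xA; exists e => //; rewrite !inE xA.
  rewrite cardsX cardsT card_ord (mulnC _ q) -(leq_pmul2l n0) mulnA.
  by apply: neighbourhood_bound hA _ => x; rewrite hx.
have [f [finj fN]] := hall_marriage (x0, Ordinal q0) hallN.
have {}finj : injective f by move=> e e'; apply: finj; rewrite inE.
have fonto : f @: setT = setT.
  by apply/eqP; rewrite eqEcard subsetT card_imset // !cardsT /= card_prod card_ord cardE.
exists (fun e => (f e).1); split=> [e|x].
  by have := fN e (in_setT e); rewrite inE => /andP[].
rewrite -(card_imset _ finj).
have -> : f @: [set e | (f e).1 == x] = setX [set x] setT.
  apply/setP=> -[y j]; rewrite !inE andbT; apply/imsetP/eqP => [[e] | yx].
    by rewrite inE => /eqP <- ->.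
  have : (y, j) \in f @: setT by rewrite fonto.
  by case/imsetP=> e _ fe; exists e => //; rewrite inE -fe yx.
by rewrite cardsX cards1 cardsT card_ord mul1n.
Qed.

(* Iterating regular_choice n times lists every member as an injective
   sequence g e 0, ..., g e (n-1) in which each point occurs at each
   position s in exactly q members. *)
Lemma orderly_choice A (x0 : P) n q : 0 < q ->
  (forall e, #|A e| = n) -> (forall x, #|[set e | x \in A e]| = n * q) ->
  exists g : E -> nat -> P,
    [/\ forall e s s', s < n -> s' < n -> g e s = g e s' -> s = s',
        forall e s, s < n -> g e s \in A e &
        forall s x, s < n -> #|[set e | g e s == x]| = q].
Proof.
elim: n A => [|n IH] A q0 hA hx; first by exists (fun _ _ => x0); split.
have [h [hA1 hcnt]] := regular_choice x0 (ltn0Sn n) q0 hA hx.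
pose A' e := A e :\ h e.
have hA' e : #|A' e| = n by have := cardsD1 (h e) (A e); rewrite hA1 hA add1n => -[].
have hx' x : #|[set e | x \in A' e]| = n * q.
  have := cardsID [set e | h e == x] [set e | x \in A e].
  have -> : [set e | x \in A e] :&: [set e | h e == x] = [set e | h e == x].
    by apply/setP=> e; rewrite !inE andb_idl // => /eqP <-.
  have -> : [set e | x \in A e] :\: [set e | h e == x] = [set e | x \in A' e].
    by apply/setP=> e; rewrite !inE eq_sym andbC.
  by rewrite hcnt hx mulSn => /addnI.
have [g [ginj gA gcnt]] := IH A' q0 hA' hx'.
have gA' e s : s < n -> g e s != h e by move=> ls; have := gA e s ls; rewrite !inE => /andP[].
exists (fun e s => if s == n then h e else g e s); split.
- move=> e s s' ls ls'; case: eqP => sn; case: eqP => s'n.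
  + by rewrite sn s'n.
  + by move=> ehg; have /negP[] := gA' e s' ltac:(lia); rewrite -ehg.
  + by move=> egh; have /negP[] := gA' e s ltac:(lia); rewrite egh.
  + by apply: ginj; lia.
- move=> e s ls; case: eqP => sn //.
  by have := gA e s; rewrite inE => /(_ ltac:(lia)) /andP[].
- by move=> s x ls; case: eqP => sn //; apply: gcnt; lia.
Qed.

Lemma orderly_encoding A (x0 : P) k q : 0 < q ->
  (forall e, #|A e| = k) -> (forall x, #|[set e | x \in A e]| = k * q) ->
  exists enc : E -> 'I_k -> P,
    [/\ forall e, injective (enc e), forall e, valid enc e = A e &
        forall s x, #|[set e | enc e s == x]| = q].
Proof.
move=> q0 hA hx; have [g [ginj gA gcnt]] := orderly_choice x0 q0 hA hx.
have encinj e : injective (fun s : 'I_k => g e s).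
  by move=> s s' /ginj => /(_ (ltn_ord s) (ltn_ord s')) /val_inj.
exists (fun e s => g e s); split=> // [e|s x]; last exact: gcnt.
apply/eqP; rewrite eqEcard card_imset // hA card_ord leqnn andbT.
by apply/subsetP=> x /imsetP[s _ ->]; apply: gA.
Qed.

End RegularChoice.

Definition ncontain (E P : finType) (A : E -> {set P}) (O : {set P}) : nat :=
  #|[set e | O \subset A e]|.

Definition balanced (E P : finType) (A : E -> {set P}) (i c : nat) : Prop :=
  forall O : {set P}, #|O| = i -> ncontain A O = c.

Lemma eq_balanced (E P : finType) (A A' : E -> {set P}) i c :
  A =1 A' -> balanced A i c -> balanced A' i c.
Proof.
move=> eqA hc O cardO; rewrite -(hc O cardO); apply: eq_card => e.
by rewrite !inE eqA.
Qed.

Section UniformFamily.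
Variables (E P : finType) (A : E -> {set P}) (k : nat).
Hypothesis hA : forall e, #|A e| = k.

(* Counting pairs (x, e) with O \subset A e and x in A e \ O. *)
Lemma ncontain_step (O : {set P}) :
  ncontain A O * (k - #|O|) = \sum_(x | x \notin O) ncontain A (x |: O).
Proof.
have := double_count (fun e => A e :\: O) [set e | O \subset A e].
rewrite (eq_bigr (fun _ => k - #|O|)) => [|e]; last by rewrite inE => sOA; rewrite cardsDS ?hA.
rewrite sum_nat_const mulnC => ->; rewrite [RHS]big_mkcond /=; apply: eq_bigr => x _.
case: ifP => xO; last first.
  by apply/eqP; rewrite cards_eq0 -subset0; apply/subsetP=> e; rewrite !inE (negbFE xO) andbF.
by apply: eq_card => e; rewrite !inE subUset sub1set xO andbC.
Qed.

(* Counting pairs (O, e) with O an i-subset of A e. *)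
Lemma ncontain_sum i :
  \sum_(O : {set P} | #|O| == i) ncontain A O = #|E| * 'C(k, i).
Proof.
transitivity (\sum_(O in [set O : {set P} | #|O| == i]) ncontain A O).
  by apply: eq_bigl => O; rewrite inE.
rewrite (double_count (fun O : {set P} => [set e | O \subset A e])) -sum_nat_const.
apply: eq_bigr => e _; rewrite -(hA e) -cards_draws.
by apply: eq_card => O; rewrite !inE andbC.
Qed.

Lemma balanced0 : balanced A 0 #|E|.
Proof.
by move=> O /eqP; rewrite cards_eq0 => /eqP ->; apply: eq_card => e; rewrite inE sub0set.
Qed.

Lemma balanced_count i c : balanced A i c -> 'C(#|P|, i) * c = #|E| * 'C(k, i).
Proof.
move=> hc; rewrite -ncontain_sum (eq_bigr (fun _ => c)) => [|O /eqP]; last exact: hc.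
by rewrite sum_nat_cond_const card_draws.
Qed.

Lemma balanced_step i c c' : i <= #|P| ->
  balanced A i c -> balanced A i.+1 c' -> c * (k - i) = (#|P| - i) * c'.
Proof.
move=> leiP hc hc'; have : 0 < #|[set O : {set P} | #|O| == i]| by rewrite card_draws bin_gt0.
rewrite card_gt0 => /set0Pn[O]; rewrite inE => /eqP cardO.
rewrite -(hc O cardO) -cardO ncontain_step (eq_bigr (fun _ => c')) => [|x xO]; last first.
  by apply: hc'; rewrite cardsU1 xO cardO.
by rewrite sum_nat_cond_const -(cardsC O) cardO addKn mulnC.
Qed.

Lemma balanced_below t lam : t <= k -> balanced A t lam ->
  forall i, i <= t -> exists c, balanced A i c.
Proof.
move=> ltk hlam i lei; rewrite -(subKn lei).
elim: (t - i) (leq_subr i t) => [|d IH] ld; first by exists lam; rewrite subn0.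
have [c hc] := IH (ltnW ld); set j := t - d.+1.
have kj : 0 < k - j by rewrite /j; lia.
exists ((#|P| - j) * c %/ (k - j)) => O cardO.
have := ncontain_step O; rewrite cardO (eq_bigr (fun _ => c)) => [|x xO]; last first.
  by apply: hc; rewrite cardsU1 xO cardO /j; lia.
by rewrite sum_nat_cond_const -(cardsC O) cardO addKn => <-; rewrite mulnK.
Qed.

End UniformFamily.

Lemma sum_image_subsets (S M : finType) (g : S -> M) (F : {set M} -> nat) i :
  injective g ->
  \sum_(T : {set S} | #|T| == i) F (g @: T) =
  \sum_(O : {set M} | (O \subset [set g s | s : S]) && (#|O| == i)) F O.
Proof.
move=> ginj.
have imsetK (O : {set M}) : O \subset [set g s | s : S] -> g @: (g @^-1: O) = O.
  move=> sOg; apply/setP=> y; apply/imsetP/idP => [[s] | yO]; first by rewrite inE => ? ->.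
  by have /imsetP[s _ ys] := subsetP sOg y yO; exists s; rewrite // inE -ys.
rewrite -[RHS]big_set.
have -> : [set O : {set M} | O \subset [set g s | s : S] & #|O| == i] =
          [set g @: T | T : {set S} in [set T : {set S} | #|T| == i]].
  apply/setP=> O; rewrite inE; apply/andP/imsetP => [[sOg /eqP <-] | [T]].
    exists (g @^-1: O); last by rewrite imsetK.
    by rewrite inE -{2}(imsetK O sOg) (card_imset _ ginj).
  rewrite inE => /eqP <- ->; split; last by rewrite (card_imset _ ginj).
  by apply/subsetP=> y /imsetP[s _ ->]; apply: imset_f.
rewrite big_imset /= => [|T1 T2 _ _]; last exact: imset_inj.
by apply: eq_bigl => T; rewrite inE.
Qed.

Lemma deception_eq (S M E : finType) (enc : E -> S -> M) pE pT i (val : rat) :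
  (exists f, @admissible M i f) -> (0 <= val)%R ->
  (forall f, admissible i f -> spoof_success enc pE pT i f = val) ->
  deception enc pE pT i = val.
Proof.
move=> [f0 adm0] val0 hval; apply/le_anti/andP; split.
  by apply: bigmax_le => // f /hval ->.
by rewrite -(hval f0 adm0); apply: le_bigmax_cond.
Qed.

Lemma admissible_exists (M : finType) i : (i < #|M|)%N -> exists f, @admissible M i f.
Proof.
move=> iM; have /card_gt0P/sigW[x0 _] : (0 < #|M|)%N by lia.
exists [ffun O => odflt x0 [pick x in ~: O]]; apply/forallP=> O; apply/implyP=> /eqP cardO.
rewrite ffunE; case: pickP => [x | noC]; first by rewrite inE.
suff : #|~: O| = 0%N by have := cardsC O; lia.
by apply/eqP; rewrite cards_eq0; apply/eqP/setP=> x; rewrite noC inE.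
Qed.

(* Arithmetic core of the spoofing bound: the success probability
   cM c' / (e cS) equals (s - i)/(m - i) under the two counting identities. *)
Lemma count_ratio (cM cS c c' e s m i : nat) :
  0 < e * cS -> i < s <= m -> cM * c = e * cS -> c * (s - i) = (m - i) * c' ->
  ((cM * c')%:R / (e * cS)%:R = (s%:R - i%:R) / (m%:R - i%:R) :> rat)%R.
Proof.
move=> ecS0 /andP[i_s sm] R1 R2.
have cross : cM * c' * (m - i) = e * cS * (s - i) by rewrite -R1 -[RHS]mulnA R2; ring.
apply/eqP; rewrite -!natrB ?(ltnW i_s) ?(leq_trans (ltnW i_s) sm) //.
rewrite eqr_div ?pnatr_eq0 -?lt0n ?subn_gt0 ?(leq_trans i_s sm) //.
by rewrite -!natrM cross mulnC.
Qed.

Section Authentication.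
Variables (S M E : finType) (enc : E -> S -> M).
Hypothesis enc_inj : forall e, injective (enc e).

Lemma card_valid e : #|valid enc e| = #|S|.
Proof. by rewrite card_imset. Qed.

Lemma perfect_secrecy_uniform :
  (forall s m, #|[set e | enc e s == m]| * #|S| = #|[set e | m \in valid enc e]|) ->
  perfect_secrecy enc (@uniformE E) (@uniformS S).
Proof.
move=> hcount s m; rewrite /uniformE /uniformS.
have S0 : (#|S|%:R : rat) != 0%R by rewrite pnatr_eq0 -lt0n; apply/card_gt0P; exists s.
have unitS (u : rat) : ((u * (1 / #|S|%:R)) *+ #|S|)%R = u.
  by rewrite -mulrnAr -mulr_natr div1r mulVf ?mulr1.
rewrite [RHS](eq_bigr (fun _ => 1 / #|E|%:R * (1 / #|S|%:R))%R) => [|e]; last first.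
  rewrite /valid => /imsetP[s0 _ ->]; congr (_ * _)%R.
  rewrite (eq_bigl (pred1 s0)) ?big_pred1_eq // => s'.
  by rewrite /= inj_eq.
by rewrite -[LHS]big_set -[RHS]big_set !sumr_const -(hcount s) mulnC mulrnA unitS.
Qed.

(* Number of (key, observed i-set) pairs on which an admissible strategy
   succeeds: the strategy adds one fresh message to each observed i-set. *)
Lemma spoof_count f i c : admissible i f -> balanced (valid enc) i.+1 c ->
  \sum_e \sum_(T : {set S} | #|T| == i) (f (enc e @: T) \in valid enc e) =
  'C(#|M|, i) * c.
Proof.
move=> adm hc.
transitivity (\sum_e \sum_(O : {set M} | #|O| == i) (f O |: O \subset valid enc e) : nat).
  apply: eq_bigr => e _.
  rewrite (sum_image_subsets (fun O => f O \in valid enc e) i (@enc_inj e)) big_mkcondl /=.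
  by apply: eq_bigr => O _; rewrite subUset sub1set andbC; case: (O \subset _).
rewrite exchange_big /= (eq_bigr (fun _ => c)) => [|O /eqP cardO].
  by rewrite sum_nat_cond_const card_draws mulnC.
rewrite -(hc (f O |: O)); last first.
  by move/forallP: adm => /(_ O); rewrite cardsU1 cardO eqxx /= => ->.
by rewrite /ncontain -[RHS]sum1_card [RHS]big_mkcond; apply: eq_bigr => e _; rewrite inE.
Qed.

Lemma spoof_success_balanced f i c : admissible i f -> balanced (valid enc) i.+1 c ->
  spoof_success enc (@uniformE E) (@equi_subsets S i) i f =
  (('C(#|M|, i) * c)%:R / (#|E| * 'C(#|S|, i))%:R)%R.
Proof.
move=> adm hc; rewrite /spoof_success /uniformE /equi_subsets.
rewrite (eq_bigr (fun e => 1 / #|E|%:R * (1 / 'C(#|S|, i)%:R) *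
    (\sum_(T : {set S} | #|T| == i) (f (enc e @: T) \in valid enc e))%:R)%R) => [|e _].
  by rewrite -mulr_sumr -natr_sum (spoof_count adm hc) !natrM invfM !div1r mulrC.
by rewrite natr_sum -[RHS]mulrA !mulr_sumr.
Qed.

Theorem fold_secure_balanced t lam : 0 < #|E| -> 0 < t <= #|S| ->
  balanced (valid enc) t lam -> fold_secure enc (@uniformE E) t.-1.
Proof.
move=> E0 /andP[t0 tS] hlam i lei.
have hA := card_valid; have /card_gt0P[e0 _] := E0.
have SM : #|S| <= #|M| by rewrite -(card_valid e0) max_card.
have lit : i < t by rewrite -(prednK t0) ltnS.
have [c hc] := balanced_below hA tS hlam (ltnW lit).
have [c' hc'] := balanced_below hA tS hlam lit.
rewrite (deception_eq _ _ (fun f adm => spoof_success_balanced adm hc')).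
- apply: count_ratio (balanced_count hA hc) (balanced_step hA _ hc hc'); last by lia.
    by rewrite muln_gt0 E0 bin_gt0; lia.
  by apply/andP; split; lia.
- by apply: admissible_exists; lia.
- by rewrite divr_ge0 ?ler0n.
Qed.

End Authentication.

Definition block (T : finType) (B : {set {set T}}) (e : 'I_#|B|) : {set T} := enum_val e.
Arguments block {T} B e.

Lemma card_block_pred (T : finType) (B : {set {set T}}) (p : pred {set T}) :
  #|[set e | p (block B e)]| = #|[set A in B | p A]|.
Proof.
rewrite -(card_imset _ (@enum_val_inj _ (mem B))); apply: eq_card => A; rewrite !inE.
apply/imsetP/andP => [[e] | [AB pA]]; first by rewrite inE => pe ->; split=> //; apply: enum_valP.
by exists (enum_rank_in AB A); rewrite ?inE /block enum_rankK_in.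
Qed.

Lemma design_family v t k lam (B : {set {set 'I_v}}) : is_design t k lam B ->
  (forall e, #|block B e| = k) /\ balanced (block B) t lam.
Proof.
case=> hBk hBt; split=> [e|O cardO]; first by apply/hBk/enum_valP.
by have := card_block_pred B (fun A => O \subset A); rewrite /ncontain /= => ->; apply: hBt.
Qed.

Lemma optimal_iff (b cv ck lam : nat) : 0 < ck -> 0 < cv -> b * ck = cv * lam ->
  (b%:R = cv%:R / ck%:R :> rat <-> lam = 1)%R.
Proof.
move=> ck0 cv0 hb; have ckR : (ck%:R : rat) != 0%R by rewrite pnatr_eq0 -lt0n.
split=> [hopt | lam1].
  have : ((b * ck)%:R = cv%:R :> rat)%R by rewrite natrM hopt divfK.
  by move/eqP; rewrite eqr_nat hb -{2}[cv]muln1 eqn_pmul2l // => /eqP.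
by apply: (mulIf ckR); rewrite divfK // -natrM hb lam1 muln1.
Qed.

Unset Implicit Arguments.
Local Open Scope ring_scope.

(* The index c1 of the design as a 1-design is k q, where b = q v, so the
   blocks admit an orderly encoding; the three properties then follow from
   the general results above. *)
Theorem mainTheorem1 (t k v lam : nat)
  (ht : (1 <= t)%N) (htk : (t <= k)%N) (hkv : (k <= v)%N) (hlam : (1 <= lam)%N)
  (B : {set {set 'I_v}}) (hB : is_design t k lam B) (hdiv : (v %| #|B|)%N) :
  exists enc : 'I_#|B| -> 'I_k -> 'I_v,
    (forall e, injective (enc e)) /\
    perfect_secrecy enc (uniformE (E:='I_#|B|)) (uniformS (S:='I_k)) /\
    fold_secure enc (uniformE (E:='I_#|B|)) t.-1 /\
    ((#|B|)%:R = ('C(v, t))%:R / ('C(k, t))%:R :> rat <-> lam = 1%N).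
Proof.
have [hA hbal] := design_family hB.
have Cvt : (0 < 'C(v, t))%N by rewrite bin_gt0; lia.
have hbt := balanced_count hA hbal; rewrite !card_ord in hbt.
have b0 : (0 < #|B|)%N.
  rewrite lt0n; apply/eqP=> b_0; move: hbt; rewrite b_0 mul0n => /eqP; rewrite muln_eq0; lia.
have [c1 hc1] := balanced_below hA htk hbal ht.
have hstep := balanced_step hA (leq0n _) (balanced0 _) hc1; rewrite !card_ord !subn0 in hstep.
have v0 : (0 < v)%N by lia.
pose q := (#|B| %/ v)%N; have hbq : #|B| = (q * v)%N by rewrite divnK.
have q0 : (0 < q)%N by move: b0; rewrite hbq muln_gt0 => /andP[].
have c1E : c1 = (k * q)%N.
  by apply/eqP; rewrite -(eqn_pmul2l v0) -hstep hbq; apply/eqP; ring.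
have hx (m : 'I_v) : #|[set e | m \in block B e]| = (k * q)%N.
  by rewrite -c1E -(hc1 [set m] (cards1 m)); apply: eq_card => e; rewrite !inE sub1set.
have [enc [encinj hvalid hcount]] := orderly_encoding (Ordinal v0) q0 hA hx.
exists enc; split; [done | split; [|split]].
- apply: perfect_secrecy_uniform => // s m.
  by rewrite hcount card_ord mulnC -(hx m); apply: eq_card => e; rewrite !inE hvalid.
- apply: (fold_secure_balanced encinj (lam := lam)); rewrite ?card_ord ?ht //.
  by apply: eq_balanced hbal => e; rewrite hvalid.
- by apply: optimal_iff; rewrite // bin_gt0.
Qed.
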